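(* For any two words $w$ and $v$ such that $v$ is a rearrangement (permutation of the letters) of $w$, the words $w$ and $v$ are cyclic Knuth equivalent.
   Context: A word is a finite sequence of letters from a totally ordered alphabet. A transformation of type $K'$ replaces three consecutive letters $yzx$ of a word with $x<y\le z$ by $yxz$. A transformation of type $K''$ replaces three consecutive letters $xzy$ with $x\le y<z$ by $zxy$. An elementary Knuth transformation is a transformation of type $K'$ or $K''$ or the inverse of one of these. The rotation $R$ moves the last letter of a word to the front. An elementary cyclic Knuth transformation is an elementary Knuth transformation or $R$; two words are cyclic Knuth equivalent if one can be obtained from the other by a finite sequence of elementary cyclic Knuth transformations. *)

From HB Require Import structures.
From mathcomp Require Import all_boot all_order.
From Stdlib Require Import Relations.
Set Implicit Arguments. Unset Strict Implicit. Unset Printing Implicit Defensive.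
Import Order.TTheory.
Local Open Scope order_scope.

Section Knuth.
Context {d : Order.disp_t} {T : orderType d}.

Definition knuthK1 (w w' : seq T) : Prop :=
  exists (u v : seq T) (x y z : T),
    x < y /\ y <= z /\ w = u ++ [:: y; z; x] ++ v /\ w' = u ++ [:: y; x; z] ++ v.

Definition knuthK2 (w w' : seq T) : Prop :=
  exists (u v : seq T) (x y z : T),
    x <= y /\ y < z /\ w = u ++ [:: x; z; y] ++ v /\ w' = u ++ [:: z; x; y] ++ v.

Definition elem_knuth (w w' : seq T) : Prop :=
  knuthK1 w w' \/ knuthK2 w w' \/ knuthK1 w' w \/ knuthK2 w' w.

Definition rotR (w : seq T) : seq T :=
  match w with
  | [::] => [::]
  | a :: s => last a s :: belast a s
  end.

Definition elem_cyc_knuth (w w' : seq T) : Prop :=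
  elem_knuth w w' \/ w' = rotR w.

Definition cyc_knuth_equiv (w v : seq T) : Prop :=
  clos_refl_trans (seq T) elem_cyc_knuth w v.
End Knuth.

From HB Require Import structures.
From mathcomp Require Import all_boot all_order.
From Stdlib Require Import Relations.
Import Order.TTheory.

(* Every word is cyclic Knuth equivalent to its weakly increasing rearrangement.
   Keep the word as p ++ q with p sorted and let x be the first letter of q.
   If x is at least every letter of p, it simply joins the sorted prefix.
   Otherwise Knuth moves row-insert x into p, bumping the first letter y > x
   to the front, and a rotation sends y to the end of q.  Each step either
   shortens q, or keeps its length and replaces a letter of p by a smaller
   one, so the process terminates. *)

Lemma split_first (A : Type) (P : pred A) (s : seq A) : has P s ->
  exists r1 y r2, s = r1 ++ y :: r2 /\ all (predC P) r1 /\ P y.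
Proof.
elim: s => [|a s IHs] //= /orP[Pa|Ps]; first by exists [::], a, s.
have [Pa|nPa] := boolP (P a); first by exists [::], a, s.
have [r1 [y [r2 [-> [r1P Py]]]]] := IHs Ps.
by exists (a :: r1), y, r2; rewrite /= nPa r1P.
Qed.

Section CyclicKnuth.
Context {d : Order.disp_t} {T : orderType d}.
Local Open Scope order_scope.

Definition knuth_equiv : seq T -> seq T -> Prop :=
  clos_refl_trans (seq T) (@elem_knuth d T).

Lemma elem_knuth_cat (u v w w' : seq T) :
  elem_knuth w w' -> elem_knuth (u ++ w ++ v) (u ++ w' ++ v).
Proof.
have K1 a b : knuthK1 a b -> knuthK1 (u ++ a ++ v) (u ++ b ++ v).
  move=> [u0 [v0 [x [y [z [xy [yz [-> ->]]]]]]]].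
  by exists (u ++ u0), (v0 ++ v), x, y, z; rewrite -!catA.
have K2 a b : knuthK2 a b -> knuthK2 (u ++ a ++ v) (u ++ b ++ v).
  move=> [u0 [v0 [x [y [z [xy [yz [-> ->]]]]]]]].
  by exists (u ++ u0), (v0 ++ v), x, y, z; rewrite -!catA.
by rewrite /elem_knuth => -[/K1|[/K2|[/K1|/K2]]]; tauto.
Qed.

Lemma knuth_equiv_cat (u v : seq T) {w w' : seq T} :
  knuth_equiv w w' -> knuth_equiv (u ++ w ++ v) (u ++ w' ++ v).
Proof.
elim=> [x y /(elem_knuth_cat u v) ?|x|x y z _ IHxy _ IHyz].
- exact: rt_step.
- exact: rt_refl.
- exact: rt_trans IHxy IHyz.
Qed.

Lemma knuth_equiv_K1 {x y z : T} :
  x < y -> y <= z -> knuth_equiv [:: y; z; x] [:: y; x; z].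
Proof.
by move=> xy yz; apply/rt_step; left; exists [::], [::], x, y, z; rewrite !cats0.
Qed.

Lemma knuth_equiv_K2 {x y z : T} :
  x <= y -> y < z -> knuth_equiv [:: x; z; y] [:: z; x; y].
Proof.
by move=> xy yz; apply/rt_step; right; left; exists [::], [::], x, y, z; rewrite !cats0.
Qed.

Lemma knuth_equiv_cyc {w w' : seq T} : knuth_equiv w w' -> cyc_knuth_equiv w w'.
Proof.
elim=> [x y ?|x|x y z _ IHxy _ IHyz].
- by apply: rt_step; left.
- exact: rt_refl.
- exact: rt_trans IHxy IHyz.
Qed.

Lemma cyc_knuth_trans {u v w : seq T} :
  cyc_knuth_equiv u v -> cyc_knuth_equiv v w -> cyc_knuth_equiv u w.
Proof. exact: rt_trans. Qed.

Lemma rotR_rcons (s : seq T) (y : T) : rotR (rcons s y) = y :: s.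
Proof. by case: s => //= a s; rewrite last_rcons belast_rcons. Qed.

Lemma cyc_knuth_rot (p q : seq T) : cyc_knuth_equiv (p ++ q) (q ++ p).
Proof.
elim/last_ind: q p => [|q y IHq] p; first by rewrite cats0; apply: rt_refl.
rewrite -rcons_cat cat_rcons; apply: cyc_knuth_trans (IHq (y :: p)).
by apply: rt_step; right; rewrite rotR_rcons.
Qed.

Lemma cyc_knuth_sym {w w' : seq T} : cyc_knuth_equiv w w' -> cyc_knuth_equiv w' w.
Proof.
elim=> [x y [xy|->]|x|x y z _ IHxy _ IHyz].
- by apply: rt_step; left; move: xy; rewrite /elem_knuth; tauto.
- case: x => [|a s]; first exact: rt_refl.
  by rewrite /= [in X in cyc_knuth_equiv _ X]lastI -cats1 -cat1s; apply: cyc_knuth_rot.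
- exact: rt_refl.
- exact: cyc_knuth_trans IHyz IHxy.
Qed.

Lemma knuth_equiv_insert_left (x y : T) (s : seq T) :
  pairwise <=%O (y :: s) -> all (fun z => x < z) (y :: s) ->
  knuth_equiv (y :: s ++ [:: x]) (y :: x :: s).
Proof.
elim/last_ind: s => [|s z IHs] sorted_s gt_x; first exact: rt_refl.
move: sorted_s gt_x; rewrite -cats1 -cat_cons pairwise_cat allrel1r all_cat.
case/and3P=> le_z sorted_s _ /andP[gt_x /andP[xz _]].
have le_lz : last y s <= z by move/allP: le_z; apply; apply: mem_last.
have lt_xl : x < last y s by move/allP: gt_x; apply; apply: mem_last.
have step := knuth_equiv_cat (belast y s) [::] (knuth_equiv_K1 lt_xl le_lz).
rewrite -!cat_rcons -lastI !cats0 in step.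
have -> : y :: (s ++ [:: z]) ++ [:: x] = rcons (rcons (y :: s) z) x.
  by rewrite -!cats1 -!catA.
apply: rt_trans step _.
have := knuth_equiv_cat [::] [:: z] (IHs sorted_s gt_x).
by rewrite -!cats1 /= -!catA.
Qed.

Lemma knuth_equiv_bump_left (x y : T) (r : seq T) :
  pairwise <=%O r -> all (fun z => z <= x) r -> x < y ->
  knuth_equiv (r ++ [:: y; x]) (y :: r ++ [:: x]).
Proof.
elim/last_ind: r x => [|r a IHr] x sorted_r le_x xy; first exact: rt_refl.
move: sorted_r le_x; rewrite -cats1 pairwise_cat allrel1r all_cat /=.
case/and3P=> le_a sorted_r _ /andP[_ /andP[ax _]].
have step := knuth_equiv_cat r [::] (knuth_equiv_K2 ax xy).
rewrite !cats0 in step.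
rewrite -catA /=; apply: rt_trans step _.
have := knuth_equiv_cat [::] [:: x] (IHr a sorted_r le_a (le_lt_trans ax xy)).
by rewrite /= -!catA.
Qed.

Lemma knuth_equiv_bump (x y : T) (r1 r2 : seq T) :
  pairwise <=%O (r1 ++ y :: r2) -> all (fun z => z <= x) r1 -> x < y ->
  knuth_equiv (r1 ++ y :: r2 ++ [:: x]) (y :: r1 ++ x :: r2).
Proof.
rewrite pairwise_cat => /and3P[_ sorted_r1 sorted_yr2] le_x xy.
have gt_x : all (fun z => x < z) (y :: r2).
  move: sorted_yr2; rewrite pairwise_cons /= xy => /andP[le_y _].
  by apply: sub_all le_y => z /(lt_le_trans xy).
have step := knuth_equiv_cat r1 [::] (knuth_equiv_insert_left _ _ _ sorted_yr2 gt_x).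
rewrite !cats0 in step; apply: rt_trans step _.
have := knuth_equiv_cat [::] r2 (knuth_equiv_bump_left _ _ _ sorted_r1 le_x xy).
by rewrite /= -!catA; apply.
Qed.

Lemma cyc_knuth_bump (p q : seq T) (x : T) :
  pairwise <=%O p -> has (fun z => x < z) p ->
  exists r1 y r2, [/\ p = r1 ++ y :: r2, x < y, pairwise <=%O (r1 ++ x :: r2)
    & cyc_knuth_equiv (p ++ x :: q) ((r1 ++ x :: r2) ++ q ++ [:: y])].
Proof.
move=> sorted_p /split_first [r1 [y [r2 [def_p [le_x xy]]]]].
have {}le_x : all (fun z => z <= x) r1.
  by apply: sub_all le_x => z /=; rewrite leNgt.
subst p; exists r1, y, r2; split=> //.
  move: sorted_p; rewrite !pairwise_cat !allrel_consr !pairwise_cons.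
  case/and3P=> /andP[_ ->] -> /andP[le_y ->]; rewrite le_x /= !andbT.
  by apply: sub_all le_y => z /(lt_le_trans xy) /ltW.
have bump : knuth_equiv (r1 ++ y :: r2 ++ x :: q) (y :: r1 ++ x :: r2 ++ q).
  have := knuth_equiv_cat [::] q (knuth_equiv_bump _ _ _ _ sorted_p le_x xy).
  by rewrite -!catA /= -!catA; apply.
rewrite -!catA; apply: cyc_knuth_trans (knuth_equiv_cyc bump) _.
by have := cyc_knuth_rot [:: y] (r1 ++ x :: r2 ++ q); rewrite -!catA /= -!catA; apply.
Qed.

Definition rank (v : seq T) (z : T) : nat := count (fun t => t < z) v.

Definition weight (v p : seq T) : nat := sumn (map (rank v) p).

Lemma rank_lt (v : seq T) (x y : T) : x \in v -> x < y -> (rank v x < rank v y)%N.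
Proof.
move=> xv xy; rewrite /rank !(permP (perm_to_rem xv)) /= xy ltxx.
by rewrite ltnS; apply: sub_count => t /lt_trans; apply.
Qed.

Lemma weight_bump (v r1 r2 : seq T) {x y : T} : x \in v -> x < y ->
  (weight v (r1 ++ x :: r2) < weight v (r1 ++ y :: r2))%N.
Proof.
by move=> xv xy; rewrite /weight !map_cat !sumn_cat /= ltn_add2l ltn_add2r rank_lt.
Qed.

Lemma cyc_knuth_sorted_prefix (v p q : seq T) :
  pairwise <=%O v -> pairwise <=%O p -> perm_eq (p ++ q) v ->
  cyc_knuth_equiv (p ++ q) v.
Proof.
move=> sorted_v; have [n] := ubnP (size q); elim: n => // n IHn in p q *.
have [m] := ubnP (weight v p); elim: m => // m IHm in p q *.
case: q => [|x q] weight_p size_q sorted_p perm_v.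
  rewrite cats0 in perm_v *; rewrite (le_sorted_eq _ _ perm_v) ?le_sorted_pairwise //.
  exact: rt_refl.
have [le_x|/allPn[z zp z_nle_x]] := boolP (all (fun z => z <= x) p).
  rewrite -cat1s catA in perm_v *; apply: IHn => //.
  by rewrite pairwise_cat allrel1r le_x sorted_p.
have gt_x : has (fun z => x < z) p by apply/hasP; exists z; rewrite // ltNge.
have [r1 [y [r2 [def_p xy sorted_p' bump]]]] := cyc_knuth_bump _ q _ sorted_p gt_x.
apply: cyc_knuth_trans bump (IHm _ _ _ _ sorted_p' _).
- have xv : x \in v by rewrite -(perm_mem perm_v) mem_cat mem_head orbT.
  rewrite def_p ltnS in weight_p.
  exact: leq_trans (weight_bump v r1 r2 xv xy) weight_p.
- by rewrite size_cat addn1.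
- apply: perm_trans perm_v; rewrite def_p -!catA perm_cat2l.
  by rewrite /= catA cats1 -rcons_cons perm_rcons perm_cons -cat1s perm_catCA.
Qed.

Lemma cyc_knuth_sort (w : seq T) : cyc_knuth_equiv w (sort <=%O w).
Proof.
apply: (cyc_knuth_sorted_prefix _ [::]) => //; last by rewrite perm_sym perm_sort.
by rewrite -le_sorted_pairwise sort_le_sorted.
Qed.

End CyclicKnuth.

Theorem mainTheorem11 (d : Order.disp_t) (T : orderType d) (w v : seq T) :
  perm_eq w v -> cyc_knuth_equiv w v.
Proof.
move=> /perm_sort_leP sort_wv; apply: cyc_knuth_trans (cyc_knuth_sort w) _.
by rewrite sort_wv; apply/cyc_knuth_sym/cyc_knuth_sort.
Qed.
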